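(* Let $\kappa=(\xi,\eta)\in S\mathbb{H}$. Then the tangent space to $S\mathbb{H}$ at $\kappa$ is $$T_\kappa S\mathbb{H}=\{(\alpha,\beta)\in\mathbb{H}^2:\alpha\bar\eta+\xi\bar\beta\in\mathcal{V}\},$$ and it decomposes into orthogonal real subspaces as $$T_\kappa S\mathbb{H}=\kappa\mathbb{H}\oplus\check\kappa\mathcal{V}=\kappa\mathbb{R}\oplus\kappa\mathbb{I}\oplus\check\kappa\mathcal{V}.$$
   Context: For $q=a+bi+cj+dk\in\mathbb{H}$, $q'=a-bi-cj+dk$, $\bar q=a-bi-cj-dk$. $\mathbb{I}=\mathrm{span}_\mathbb{R}\{i,j,k\}$, $\mathcal{V}=\mathrm{span}_\mathbb{R}\{1,i,j\}$. $S\mathbb{H}=\{(\xi,\eta)\in\mathbb{H}^2\setminus\{(0,0)\}:\xi\bar\eta\in\mathcal{V}\}$, a smooth submanifold of $\mathbb{H}^2$. For $\kappa=(\xi,\eta)$, $\check\kappa=(\eta',-\xi')$, and $\kappa X=\{(\xi x,\eta x):x\in X\}$. Orthogonality is with respect to the real inner product $\langle\kappa_1,\kappa_2\rangle=\mathrm{Re}(\xi_1\bar\xi_2+\eta_1\bar\eta_2)$ on $\mathbb{H}^2$. *)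

From Stdlib Require Import Reals.
From Coquelicot Require Import Coquelicot.
Open Scope R_scope.

(* Quaternions q = q0 + q1 i + q2 j + q3 k, as a record of four reals. *)
Record quat := Quat { q0 : R; q1 : R; q2 : R; q3 : R }.

Definition qadd (p q : quat) : quat :=
  Quat (q0 p + q0 q) (q1 p + q1 q) (q2 p + q2 q) (q3 p + q3 q).

(* Hamilton product, with i^2 = j^2 = k^2 = ijk = -1. *)
Definition qmul (p q : quat) : quat :=
  Quat (q0 p * q0 q - q1 p * q1 q - q2 p * q2 q - q3 p * q3 q)
       (q0 p * q1 q + q1 p * q0 q + q2 p * q3 q - q3 p * q2 q)
       (q0 p * q2 q - q1 p * q3 q + q2 p * q0 q + q3 p * q1 q)
       (q0 p * q3 q + q1 p * q2 q - q2 p * q1 q + q3 p * q0 q).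

Definition qopp (q : quat) : quat := Quat (- q0 q) (- q1 q) (- q2 q) (- q3 q).
Definition qzero : quat := Quat 0 0 0 0.

Definition qconj (q : quat) : quat := Quat (q0 q) (- q1 q) (- q2 q) (- q3 q).
Definition qprime (q : quat) : quat := Quat (q0 q) (- q1 q) (- q2 q) (q3 q).

(* V = span_R {1, i, j} ; I = span_R {i, j, k} ; R = real quaternions *)
Definition inV (q : quat) : Prop := q3 q = 0.
Definition inI (q : quat) : Prop := q0 q = 0.
Definition inReal (q : quat) : Prop := q1 q = 0 /\ q2 q = 0 /\ q3 q = 0.
Definition inH (q : quat) : Prop := True.

Definition H2 := (quat * quat)%type.

Definition h2add (u v : H2) : H2 := (qadd (fst u) (fst v), qadd (snd u) (snd v)).

Definition h2inner (u v : H2) : R :=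
  q0 (qadd (qmul (fst u) (qconj (fst v))) (qmul (snd u) (qconj (snd v)))).

Definition SH (kp : H2) : Prop :=
  kp <> (qzero, qzero) /\ inV (qmul (fst kp) (qconj (snd kp))).

Definition check (kp : H2) : H2 := (qprime (snd kp), qopp (qprime (fst kp))).

Definition rmulset (kp : H2) (X : quat -> Prop) (v : H2) : Prop :=
  exists x, X x /\ v = (qmul (fst kp) x, qmul (snd kp) x).

Definition coord (n : nat) (u : H2) : R :=
  match n%nat with
  | 0 => q0 (fst u) | 1 => q1 (fst u) | 2 => q2 (fst u) | 3 => q3 (fst u)
  | 4 => q0 (snd u) | 5 => q1 (snd u) | 6 => q2 (snd u) | 7 => q3 (snd u)
  | _ => 0%R
  end.

Definition smooth_curve (c : R -> H2) : Prop :=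
  forall (n : nat), (n < 8)%nat ->
    forall (m : nat) (t : R), ex_derive_n (fun s => coord n (c s)) m t.

Definition tangent_space (S : H2 -> Prop) (p : H2) (v : H2) : Prop :=
  exists (c : R -> H2) (eps : R),
    0 < eps /\ smooth_curve c /\
    (forall t, Rabs t < eps -> S (c t)) /\ c 0 = p /\
    (forall n, (n < 8)%nat -> is_derive (fun s => coord n (c s)) 0 (coord n v)).

Definition setsum2 (A B : H2 -> Prop) (v : H2) : Prop :=
  exists a b, A a /\ B b /\ v = h2add a b.

Definition orth (A B : H2 -> Prop) : Prop :=
  forall a b, A a -> B b -> h2inner a b = 0.

(* Write mu (xi, eta) = xi * conj eta, so that SH is the set of nonzero kappa
   with q3 (mu kappa) = 0.  Differentiating along a curve in SH shows that a
   tangent vector v = (alpha, beta) satisfies q3 (alpha conj eta + xi conj beta) = 0.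
   Conversely, for such v the identity
     |kappa|^2 v = kappa <kappa, v> + check kappa P_V <check kappa, v>
   (with <., .> the quaternion-valued Hermitian product and P_V the projection
   onto V) puts v in kappa H + check kappa V.  Finally kappa x + check kappa w,
   with w in V, is the velocity at 0 of t |-> (kappa + t check kappa w)(1 + t x),
   a curve in SH because q3 (mu (kappa + t check kappa w)) = (1 + t^2 |w|^2)
   q3 (mu kappa) and mu (kappa u) = |u|^2 mu kappa.  Orthogonality comes from
   <kappa x, check kappa w> = 2 q3 (mu kappa) Re (k x conj w) and
   <kappa x, kappa y> = |kappa|^2 Re (x conj y). *)

From Stdlib Require Import Reals Lra Lia.
From Coquelicot Require Import Coquelicot.
Open Scope R_scope.

Definition qone : quat := Quat 1 0 0 0.
Definition qk : quat := Quat 0 0 0 1.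
Definition qscal (r : R) (q : quat) : quat :=
  Quat (r * q0 q) (r * q1 q) (r * q2 q) (r * q3 q).
Definition qnorm2 (q : quat) : R :=
  q0 q * q0 q + q1 q * q1 q + q2 q * q2 q + q3 q * q3 q.
Definition projV (q : quat) : quat := Quat (q0 q) (q1 q) (q2 q) 0.

Definition h2scal (r : R) (u : H2) : H2 := (qscal r (fst u), qscal r (snd u)).
Definition h2rmul (u : H2) (x : quat) : H2 := (qmul (fst u) x, qmul (snd u) x).
Definition h2dot (u v : H2) : quat :=
  qadd (qmul (qconj (fst u)) (fst v)) (qmul (qconj (snd u)) (snd v)).

Definition mul_conj (u : H2) : quat := qmul (fst u) (qconj (snd u)).
Definition mul_conj_diff (u v : H2) : quat :=
  qadd (qmul (fst v) (qconj (snd u))) (qmul (fst u) (qconj (snd v))).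

Lemma quat_ext p q :
  q0 p = q0 q -> q1 p = q1 q -> q2 p = q2 q -> q3 p = q3 q -> p = q.
Proof. destruct p, q; cbn; intros -> -> -> ->; reflexivity. Qed.

Ltac quat_ring :=
  repeat match goal with u : H2 |- _ => destruct u end;
  repeat match goal with q : quat |- _ => destruct q end;
  cbv [qone qk qscal qnorm2 projV h2add h2scal h2rmul h2dot h2inner mul_conj
       mul_conj_diff check coord qadd qmul qopp qzero qconj qprime fst snd q0 q1 q2 q3];
  repeat match goal with
         | |- (_, _) = (_, _) => f_equal
         | |- @eq quat _ _ => apply quat_ext
         end;
  cbn [q0 q1 q2 q3]; ring.

Lemma mul_conj_rmul u x : mul_conj (h2rmul u x) = qscal (qnorm2 x) (mul_conj u).
Proof. quat_ring. Qed.

Lemma h2inner_rmul u x y :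
  h2inner (h2rmul u x) (h2rmul u y) = h2inner u u * q0 (qmul x (qconj y)).
Proof. quat_ring. Qed.

Lemma h2inner_rmul_check u x w :
  h2inner (h2rmul u x) (h2rmul (check u) w)
  = 2 * q3 (mul_conj u) * q0 (qmul qk (qmul x (qconj w))).
Proof. quat_ring. Qed.

(* The last two summands vanish when [u] is in SH and [v] satisfies the
   linearised constraint. *)
Lemma h2scal_norm_decomposition u v :
  h2scal (h2inner u u) v
  = h2add (h2add (h2rmul u (h2dot u v)) (h2rmul (check u) (projV (h2dot (check u) v))))
      (h2add (h2rmul (check u) (qscal (q3 (mul_conj_diff u v)) qk))
             (h2scal (2 * q3 (mul_conj u)) (qopp (qmul qk (snd v)), qmul qk (fst v)))).
Proof. quat_ring. Qed.

Lemma mul_conj_add_check u w t : inV w ->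
  q3 (mul_conj (h2add u (h2scal t (h2rmul (check u) w))))
  = (1 + t * t * qnorm2 w) * q3 (mul_conj u).
Proof. destruct w as [w0 w1 w2 w3]; unfold inV; cbn; intros ->; quat_ring. Qed.

Lemma h2inner_add_check u w t : inV w ->
  h2inner (h2add u (h2scal t (h2rmul (check u) w))) (h2add u (h2scal t (h2rmul (check u) w)))
  = (1 + t * t * qnorm2 w) * h2inner u u.
Proof. destruct w as [w0 w1 w2 w3]; unfold inV; cbn; intros ->; quat_ring. Qed.

Lemma qnorm2_ge0 q : 0 <= qnorm2 q.
Proof. destruct q; unfold qnorm2; cbn; nra. Qed.

Lemma qnorm2_eq0 q : qnorm2 q = 0 -> q = qzero.
Proof.
  destruct q as [a b c d]; unfold qnorm2; cbn; intro H.
  assert (a = 0) by nra; assert (b = 0) by nra; assert (c = 0) by nra; assert (d = 0) by nra.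
  subst; reflexivity.
Qed.

Lemma qnorm2_pos q : q <> qzero -> 0 < qnorm2 q.
Proof.
  intro Hq; destruct (Rle_lt_dec (qnorm2 q) 0) as [Hle|]; [exfalso|assumption].
  apply Hq, qnorm2_eq0; pose proof (qnorm2_ge0 q); lra.
Qed.

Lemma h2inner_self_pos u : u <> (qzero, qzero) -> 0 < h2inner u u.
Proof.
  intro Hu.
  replace (h2inner u u) with (qnorm2 (fst u) + qnorm2 (snd u)) by quat_ring.
  pose proof (qnorm2_ge0 (fst u)); pose proof (qnorm2_ge0 (snd u)).
  destruct (Rle_lt_dec (qnorm2 (fst u) + qnorm2 (snd u)) 0) as [Hle|]; [exfalso|assumption].
  apply Hu; destruct u as [xi eta]; cbn in *.
  rewrite (qnorm2_eq0 xi), (qnorm2_eq0 eta) by lra; reflexivity.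
Qed.

Lemma h2_ne0_of_inner_pos u : 0 < h2inner u u -> u <> (qzero, qzero).
Proof. intros Hpos ->; cbv in Hpos; lra. Qed.

Lemma SH_rmul u x : SH u -> x <> qzero -> SH (h2rmul u x).
Proof.
  intros [Hu HV] Hx; split.
  - apply h2_ne0_of_inner_pos; rewrite h2inner_rmul.
    replace (q0 (qmul x (qconj x))) with (qnorm2 x) by quat_ring.
    apply Rmult_lt_0_compat; [now apply h2inner_self_pos | now apply qnorm2_pos].
  - change (q3 (mul_conj (h2rmul u x)) = 0).
    change (q3 (mul_conj u) = 0) in HV.
    rewrite mul_conj_rmul; cbn [qscal q3]; rewrite HV; ring.
Qed.

Lemma SH_add_check u w t : SH u -> inV w -> SH (h2add u (h2scal t (h2rmul (check u) w))).
Proof.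
  intros [Hu HV] Hw.
  assert (Hs : 0 < 1 + t * t * qnorm2 w) by (pose proof (qnorm2_ge0 w); nra).
  split.
  - apply h2_ne0_of_inner_pos; rewrite h2inner_add_check by exact Hw.
    apply Rmult_lt_0_compat; [exact Hs | now apply h2inner_self_pos].
  - change (q3 (mul_conj (h2add u (h2scal t (h2rmul (check u) w)))) = 0).
    change (q3 (mul_conj u) = 0) in HV.
    rewrite mul_conj_add_check, HV by exact Hw; ring.
Qed.

Lemma coord_h2add n u v : coord n (h2add u v) = coord n u + coord n v.
Proof. do 8 (destruct n as [|n]; [cbn; ring|]); cbn; ring. Qed.

Lemma coord_h2scal n r u : coord n (h2scal r u) = r * coord n u.
Proof. do 8 (destruct n as [|n]; [cbn; ring|]); cbn; ring. Qed.

Lemma ex_derive_n_quadratic a b c m t :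
  ex_derive_n (fun s => a + s * b + s * s * c) m t.
Proof.
  apply (ex_derive_n_ext (fun s => (a + s ^ 1 * b) + s ^ 2 * c)); [intro s; cbn; ring|].
  apply ex_derive_n_plus; apply filter_forall; intros y k _;
    [apply ex_derive_n_plus; apply filter_forall; intros z l _|];
    [apply ex_derive_n_const | ..]; apply ex_derive_n_scal_r, ex_derive_n_pow.
Qed.

Lemma tangent_space_of_quadratic_curve (S : H2 -> Prop) u v w eps : 0 < eps ->
  (forall t, Rabs t < eps -> S (h2add u (h2add (h2scal t v) (h2scal (t * t) w)))) ->
  tangent_space S u v.
Proof.
  intros Heps HS.
  set (c := fun t => h2add u (h2add (h2scal t v) (h2scal (t * t) w))).
  assert (Hc : forall n t, coord n (c t) = coord n u + t * coord n v + t * t * coord n w).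
  { intros n t; unfold c; rewrite !coord_h2add, !coord_h2scal; ring. }
  exists c, eps; split; [exact Heps|]; split; [|split; [exact HS|split]].
  - intros n _ m t.
    apply (ex_derive_n_ext (fun s => coord n u + s * coord n v + s * s * coord n w)).
    + intro s; symmetry; apply Hc.
    + apply ex_derive_n_quadratic.
  - unfold c; quat_ring.
  - intros n _.
    apply (is_derive_ext (fun s => coord n u + s * coord n v + s * s * coord n w)).
    + intro s; symmetry; apply Hc.
    + auto_derive; [exact I | ring].
Qed.

Lemma h2rmul_add_check_curve u x w t :
  h2rmul (h2add u (h2scal t (h2rmul (check u) w))) (qadd qone (qscal t x))
  = h2add u (h2add (h2scal t (h2add (h2rmul u x) (h2rmul (check u) w)))
                   (h2scal (t * t) (h2rmul (h2rmul (check u) w) x))).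
Proof. quat_ring. Qed.

Lemma qone_add_scal_ne0 x t : Rabs t < / (1 + Rabs (q0 x)) -> qadd qone (qscal t x) <> qzero.
Proof.
  intros Ht E; apply (f_equal q0) in E; cbn in E.
  pose proof (Rabs_pos t); pose proof (Rabs_pos (q0 x)).
  assert (Hprod : Rabs t * (1 + Rabs (q0 x)) < 1).
  { apply Rmult_lt_compat_r with (r := 1 + Rabs (q0 x)) in Ht; [|lra].
    rewrite Rinv_l in Ht; lra. }
  assert (Hsmall : Rabs (t * q0 x) < 1) by (rewrite Rabs_mult; nra).
  apply Rabs_def2 in Hsmall; lra.
Qed.

Lemma tangent_space_SH_of_sum u x w : SH u -> inV w ->
  tangent_space SH u (h2add (h2rmul u x) (h2rmul (check u) w)).
Proof.
  intros Hu Hw.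
  apply (tangent_space_of_quadratic_curve _ _ _ (h2rmul (h2rmul (check u) w) x)
           (/ (1 + Rabs (q0 x)))).
  - apply Rinv_0_lt_compat; pose proof (Rabs_pos (q0 x)); lra.
  - intros t Ht; rewrite <- h2rmul_add_check_curve.
    apply SH_rmul; [now apply SH_add_check | now apply qone_add_scal_ne0].
Qed.

Lemma q3_mul_conj_coord u : q3 (mul_conj u)
  = coord 3 u * coord 4 u - coord 0 u * coord 7 u - coord 1 u * coord 6 u + coord 2 u * coord 5 u.
Proof. quat_ring. Qed.

Lemma is_derive_q3_mul_conj (c : R -> H2) t v :
  (forall n, (n < 8)%nat -> is_derive (fun s => coord n (c s)) t (coord n v)) ->
  is_derive (fun s => q3 (mul_conj (c s))) t (q3 (mul_conj_diff (c t) v)).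
Proof.
  intro Hd; evar (l : R).
  assert (Hl : is_derive (fun s => coord 3 (c s) * coord 4 (c s) - coord 0 (c s) * coord 7 (c s)
                                 - coord 1 (c s) * coord 6 (c s) + coord 2 (c s) * coord 5 (c s)) t l).
  { unfold l.
    (* The generic sum rules only unify with [Rplus]/[Rminus] once the
       structures are given. *)
    apply (@is_derive_plus R_AbsRing R_NormedModule);
      [apply (@is_derive_minus R_AbsRing R_NormedModule);
         [apply (@is_derive_minus R_AbsRing R_NormedModule)|]|];
      (apply Derive.is_derive_mult; apply Hd; lia). }
  replace (q3 (mul_conj_diff (c t) v)) with l.
  - eapply is_derive_ext; [|exact Hl]; intro s; symmetry; apply q3_mul_conj_coord.
  - unfold l; destruct (c t) as [[] []], v as [[] []]; cbv; ring.
Qed.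

Lemma tangent_space_SH_mul_conj_diff u v : tangent_space SH u v -> inV (mul_conj_diff u v).
Proof.
  intros (c & eps & Heps & _ & Hin & Hc0 & Hd).
  assert (Hzero : is_derive (fun s => q3 (mul_conj (c s))) 0 0).
  { apply (is_derive_ext_loc (fun _ => 0)); [|apply (@is_derive_const R_AbsRing R_NormedModule)].
    exists (mkposreal eps Heps); intros s Hs.
    change (Rabs (s - 0) < eps) in Hs; rewrite Rminus_0_r in Hs.
    symmetry; apply (Hin s Hs). }
  unfold inV; rewrite <- Hc0.
  rewrite <- (is_derive_unique _ _ _ (is_derive_q3_mul_conj c 0 v Hd)).
  exact (is_derive_unique _ _ _ Hzero).
Qed.

Lemma h2scal_inv r v : r <> 0 -> h2scal (/ r) (h2scal r v) = v.
Proof.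
  intro Hr.
  replace (h2scal (/ r) (h2scal r v)) with (h2scal (/ r * r) v) by quat_ring.
  rewrite Rinv_l by exact Hr; quat_ring.
Qed.

Lemma SH_constraint_decompose u v : SH u -> inV (mul_conj_diff u v) ->
  setsum2 (rmulset u inH) (rmulset (check u) inV) v.
Proof.
  intros [Hu HSH] Hv.
  assert (HN : h2inner u u <> 0) by (apply Rgt_not_eq, h2inner_self_pos, Hu).
  set (x := qscal (/ h2inner u u) (h2dot u v)).
  set (w := qscal (/ h2inner u u) (projV (h2dot (check u) v))).
  exists (h2rmul u x), (h2rmul (check u) w).
  split; [exists x; split; [exact I | reflexivity]|].
  split; [exists w; split; [unfold inV; cbn; ring | reflexivity]|].
  rewrite <- (h2scal_inv (h2inner u u) v) at 1 by exact HN.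
  change (q3 (mul_conj u) = 0) in HSH; unfold inV in Hv.
  rewrite h2scal_norm_decomposition, HSH, Hv.
  unfold x, w; generalize (/ h2inner u u); intro r; quat_ring.
Qed.

Lemma orth_rmulset_check u X Y : inV (mul_conj u) -> orth (rmulset u X) (rmulset (check u) Y).
Proof.
  intros HV a b [x [_ ->]] [w [_ ->]].
  change (h2inner (h2rmul u x) (h2rmul (check u) w) = 0).
  rewrite h2inner_rmul_check; unfold inV in HV; rewrite HV; ring.
Qed.

Lemma orth_rmulset_real_imag u : orth (rmulset u inReal) (rmulset u inI).
Proof.
  intros a b [[x0 x1 x2 x3] [Hx ->]] [[y0 y1 y2 y3] [Hy ->]].
  change (h2inner (h2rmul u (Quat x0 x1 x2 x3)) (h2rmul u (Quat y0 y1 y2 y3)) = 0).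
  rewrite h2inner_rmul; unfold inReal, inI in *; cbn in *.
  destruct Hx as (-> & -> & ->); rewrite Hy; ring.
Qed.

Lemma rmulset_inH_split u v :
  rmulset u inH v <-> setsum2 (rmulset u inReal) (rmulset u inI) v.
Proof.
  split.
  - intros [[x0 x1 x2 x3] [_ ->]].
    exists (h2rmul u (Quat x0 0 0 0)), (h2rmul u (Quat 0 x1 x2 x3)).
    split; [exists (Quat x0 0 0 0); repeat split|].
    split; [exists (Quat 0 x1 x2 x3); repeat split|].
    quat_ring.
  - intros (a & b & [x [_ ->]] & [y [_ ->]] & ->).
    exists (qadd x y); split; [exact I | quat_ring].
Qed.

Lemma setsum2_ext_l (A A' B : H2 -> Prop) :
  (forall v, A v <-> A' v) -> forall v, setsum2 A B v <-> setsum2 A' B v.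
Proof.
  intros HA v; split; intros (a & b & Ha & Hb & ->); exists a, b; split; try apply HA; auto.
Qed.

Theorem lemma3p11 (kp : H2) : SH kp ->
  (* T_kappa SH = {(alpha,beta) : alpha bar eta + xi bar beta in V} *)
  (forall v : H2, tangent_space SH kp v <->
     inV (qadd (qmul (fst v) (qconj (snd kp))) (qmul (fst kp) (qconj (snd v))))) /\
  (* T_kappa SH = kappa H (+) check kappa V, orthogonal *)
  (forall v : H2, tangent_space SH kp v <->
     setsum2 (rmulset kp inH) (rmulset (check kp) inV) v) /\
  orth (rmulset kp inH) (rmulset (check kp) inV) /\
  (* T_kappa SH = kappa R (+) kappa I (+) check kappa V, pairwise orthogonal *)
  (forall v : H2, tangent_space SH kp v <->
     setsum2 (setsum2 (rmulset kp inReal) (rmulset kp inI))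
             (rmulset (check kp) inV) v) /\
  orth (rmulset kp inReal) (rmulset kp inI) /\
  orth (rmulset kp inReal) (rmulset (check kp) inV) /\
  orth (rmulset kp inI) (rmulset (check kp) inV).
Proof.
  intro HSH.
  assert (Htangent : forall v, tangent_space SH kp v <->
                               setsum2 (rmulset kp inH) (rmulset (check kp) inV) v).
  { intro v; split.
    - intro Hv; apply SH_constraint_decompose, tangent_space_SH_mul_conj_diff; assumption.
    - intros (a & b & [x [_ ->]] & [w [Hw ->]] & ->); apply tangent_space_SH_of_sum; assumption. }
  assert (Horth : forall X Y, orth (rmulset kp X) (rmulset (check kp) Y))
    by (intros; apply orth_rmulset_check, HSH).
  split; [|split; [exact Htangent|split; [apply Horth|split; [|split; [|split; apply Horth]]]]].
  - intro v; split; [apply tangent_space_SH_mul_conj_diff|].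
    intro Hv; apply Htangent, SH_constraint_decompose; assumption.
  - intro v; rewrite Htangent; apply setsum2_ext_l, rmulset_inH_split.
  - apply orth_rmulset_real_imag.
Qed.
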